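(* Let $3 \leq p \leq q$ be integers. Then the quadratic equation $x^2-(q+3)x+(pq+2)=0$ has two integral roots $p'', q''\in [2,\infty)$ if and only if there exist nonnegative integers $a,b,b',t$ with $1 \leq b,b' < a$, $\gcd(a,b)=1$, $bb' \equiv 1 \pmod a$, and $bb'+t \geq 2$ such that $$p=b(a-b)t+bb'+\frac{b(1-bb')}{a}+1,\qquad q=a^2t+ab',$$ $$p''=\frac{bq}{a}+1,\qquad q''=q+2-\frac{bq}{a}.$$ *)

From mathcomp Require Import all_boot all_order all_algebra.
Set Implicit Arguments. Unset Strict Implicit. Unset Printing Implicit Defensive.
Import Order.TTheory GRing.Theory Num.Theory.
Local Open Scope ring_scope.

Definition quadPQ (p q : int) : {poly int} :=
  'X^2 - (q + 3)%:P * 'X + (p * q + 2)%:P.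

Definition are_roots (p q r s : int) : Prop :=
  quadPQ p q = ('X - r%:P) * ('X - s%:P).

From mathcomp Require Import all_boot all_order all_algebra.
From mathcomp Require Import ring zify.

Set Implicit Arguments.
Unset Strict Implicit.
Unset Printing Implicit Defensive.
Import Order.TTheory GRing.Theory Num.Theory.
Local Open Scope ring_scope.

(** Vieta turns the root condition into [r + s = q + 3] and [r s = p q + 2];
    writing [r = x + 1] this becomes [x (q + 1 - x) = (p - 1) q].  Put
    [g = gcd(x, q)], [x = b g], [q = a g] with [a, b] coprime; dividing by [g]
    gives [b (a g + 1 - b g) = (p - 1) a], so [a] divides [1 - b g], i.e. [g]
    reduces modulo [a] to an inverse [b'] of [b].  Euclidean division
    [g = a t + b'] then yields the formulas for [p] and [q], and
    [b q / a = b g = x] recovers the roots.  Conversely the parametrization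
    makes [b q / a = b (a t + b')], from which both roots are at least [2]. *)

Lemma monic_quadraticE (R : comNzRingType) (c d r s : R) :
  'X^2 - c%:P * 'X + d%:P = ('X - r%:P) * ('X - s%:P) <->
  r + s = c /\ r * s = d.
Proof.
have -> : ('X - r%:P) * ('X - s%:P) = 'X^2 - (r + s)%:P * 'X + (r * s)%:P.
  by rewrite polyCD polyCM; ring.
split => [E|[-> ->]] //.
have E0 := congr1 (fun P : {poly R} => P`_0) E.
have E1 := congr1 (fun P : {poly R} => P`_1) E.
rewrite !coefE /= !(mulr0, mulr1, oppr0, sub0r, addr0, add0r) in E0 E1.
by split; [apply: oppr_inj; rewrite E1 | rewrite E0].
Qed.

Lemma are_rootsE (p q r s : int) :
  are_roots p q r s <-> r + s = q + 3 /\ r * s = p * q + 2.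
Proof. exact: monic_quadraticE. Qed.

Lemma gcdz_split (m n : int) : n != 0 ->
  exists g a b : int, [/\ 0 < g, m = b * g, n = a * g & coprimez a b].
Proof.
move=> n_neq0; set g := gcdz m n.
have g_gt0 : 0 < g by rewrite lt0r gcdz_eq0 negb_and n_neq0 orbT /=.
exists g, (n %/ g)%Z, (m %/ g)%Z.
rewrite !divzK ?dvdz_gcdl ?dvdz_gcdr //; split=> //.
apply/eqP/(@mulIf _ g); first by rewrite gt_eqF.
rewrite mul1r -[g in _ * g]gtr0_norm // mulz_gcdl !divzK ?dvdz_gcdl ?dvdz_gcdr //.
exact: gcdzC.
Qed.

Definition coprime_split (p a b g : int) :=
  [/\ 0 < g, 0 < b < a, coprimez a b & b * (a * g + 1 - b * g) = (p - 1) * a].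

Lemma roots_coprime_split (p q r s : int) :
  3 <= p -> 2 <= r -> 2 <= s -> r + s = q + 3 -> r * s = p * q + 2 ->
  exists g a b : int, [/\ coprime_split p a b g, r = b * g + 1 & q = a * g].
Proof.
move=> p_ge3 r_ge2 s_ge2 sum_rs prod_rs.
have shifted : (r - 1) * (q + 1 - (r - 1)) = (p - 1) * q.
  have sE : s = q + 3 - r by lia.
  rewrite sE in prod_rs; lia.
have [|g [a [b [g_gt0 r1E qE coprime_ab]]]] := @gcdz_split (r - 1) q.
  by apply/eqP; lia.
have split_eq : b * (a * g + 1 - b * g) = (p - 1) * a.
  apply: (@mulIf _ g); first by rewrite gt_eqF.
  by rewrite mulrAC -r1E -mulrA -qE.
exists g, a, b; split; [split=> // | lia | by []].
have b_gt0 : 0 < b by rewrite -(pmulr_lgt0 _ g_gt0) -r1E; lia.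
have b_le_a : b <= a by rewrite -(ler_pM2r g_gt0) -r1E -qE; lia.
rewrite b_gt0 lt_neqAle b_le_a andbT; apply/eqP => ba.
move: split_eq; rewrite -ba (addrC (b * g)) addrK mulr1 => b_eq.
have : 0 < (p - 2) * b by apply: mulr_gt0; lia.
lia.
Qed.

Section CoprimeSplit.

Variables p a b g : int.
Hypothesis split_pabg : coprime_split p a b g.

Let g_gt0 : 0 < g. Proof. by case: split_pabg. Qed.
Let b_gt0 : 0 < b. Proof. by case: split_pabg => _ /andP[]. Qed.
Let lt_ba : b < a. Proof. by case: split_pabg => _ /andP[]. Qed.
Let coprime_ab : coprimez a b. Proof. by case: split_pabg. Qed.
Let split_eq : b * (a * g + 1 - b * g) = (p - 1) * a.
Proof. by case: split_pabg. Qed.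

Lemma split_modinv : (b * g == 1 %[mod a])%Z.
Proof.
rewrite eq_sym eqz_mod_dvd -(Gauss_dvdzr _ coprime_ab).
by apply/dvdzP; exists (p - 1 - b * g); lia.
Qed.

Lemma split_residue_modinv : (b * (g %% a)%Z == 1 %[mod a])%Z.
Proof. by rewrite modzMmr split_modinv. Qed.

Lemma split_residue_gt0 : 0 < (g %% a)%Z.
Proof.
rewrite lt_neqAle modz_ge0 ?andbT; last by rewrite gt_eqF //; lia.
apply/eqP => residue0; move: split_residue_modinv.
by rewrite -residue0 mulr0 mod0z modz_small //; lia.
Qed.

Lemma split_p_formula :
  p = b * (a - b) * (g %/ a)%Z + b * (g %% a)%Z
      + (b * (1 - b * (g %% a)%Z) %/ a)%Z + 1.
Proof.
set t := (g %/ a)%Z; set b' := (g %% a)%Z.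
have gE : g = t * a + b' by exact: divz_eq.
have -> : b * (1 - b * b') = a * (p - 1 - b * (a - b) * t - b * b').
  by move: split_eq; rewrite gE; lia.
rewrite mulKz; [lia | rewrite gt_eqF //; lia].
Qed.

Lemma split_weight_ge2 : 3 <= p -> 2 <= b * (g %% a)%Z + (g %/ a)%Z.
Proof.
move=> p_ge3; set t := (g %/ a)%Z; set b' := (g %% a)%Z.
have t_ge0 : 0 <= t by rewrite divz_ge0; lia.
have b'_gt0 : 0 < b' := split_residue_gt0.
have bb'_gt0 : 0 < b * b' by rewrite mulr_gt0.
rewrite leNgt; apply/negP => small.
have [t0 bb'1] : t = 0 /\ b * b' = 1 by lia.
have [b1 b'1] : b = 1 /\ b' = 1 by move: b_gt0 b'_gt0 bb'1; clear; nia.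
have g1 : g = 1 by rewrite (divz_eq g a) -/t -/b' t0 b'1 mul0r add0r.
move: split_eq; rewrite g1 b1 !mul1r mulr1 addrK => a_eq.
have : 0 < (p - 2) * a by apply: mulr_gt0; lia.
lia.
Qed.

End CoprimeSplit.

Theorem lemma4p2 (p q : int) (hp : 3 <= p) (hpq : p <= q) :
  (exists p'' q'' : int, 2 <= p'' /\ 2 <= q'' /\ are_roots p q p'' q'')
  <->
  (exists a b b' t : int,
     [/\ 0 <= t, 1 <= b < a, 1 <= b' < a, gcdz a b = 1 &
       (b * b' == 1 %[mod a])%Z] /\
     2 <= b * b' + t /\
     p = b * (a - b) * t + b * b' + (b * (1 - b * b') %/ a)%Z + 1 /\
     q = a ^+ 2 * t + a * b' /\
     are_roots p q ((b * q %/ a)%Z + 1) (q + 2 - (b * q %/ a)%Z)).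
Proof.
split; last first.
  case=> a [b [b' [t [[t_ge0 /andP[b_ge1 lt_ba] /andP[b'_ge1 _] _ _] [_ [_ [qE roots]]]]]]].
  have qE' : q = a * (a * t + b') by rewrite qE; ring.
  have bqE : (b * q %/ a)%Z = b * (a * t + b') by rewrite qE' mulrCA mulKz //; lia.
  exists ((b * q %/ a)%Z + 1), (q + 2 - (b * q %/ a)%Z).
  by split; [|split; [|exact: roots]]; rewrite bqE ?qE'; nia.
case=> r [s [r_ge2 [s_ge2 /are_rootsE [sum_rs prod_rs]]]].
have [g [a [b [split_pabg rE qE]]]] :=
  roots_coprime_split hp r_ge2 s_ge2 sum_rs prod_rs.
have [g_gt0 /andP[b_gt0 lt_ba] coprime_ab _] := split_pabg.
have b'_gt0 := split_residue_gt0 split_pabg.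
have b'_lt_a : (g %% a)%Z < a by rewrite ltz_pmod //; lia.
have bqE : (b * q %/ a)%Z = b * g by rewrite qE mulrCA mulKz //; lia.
exists a, b, (g %% a)%Z, (g %/ a)%Z; split; last split; last split.
- split; [by rewrite divz_ge0; lia | by apply/andP; lia | by apply/andP; lia
         | exact/eqP | exact: split_residue_modinv split_pabg].
- exact: split_weight_ge2 split_pabg hp.
- exact: split_p_formula.
split; first by rewrite qE {1}(divz_eq g a); ring.
by rewrite bqE -rE; apply/are_rootsE; split; lia.
Qed.
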